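(* Let $q(y,z|x)$ be a broadcast channel with finite alphabets such that $q(y|x)>0$ and $q(z|x)>0$ for all $x,y,z$. Fix $\lambda\in[0,1]$ and let $p(u,v,w,x)$ (finite alphabets) be a joint distribution with $H(X|U,V,W)=0$ that maximizes $$\lambda I(W;Y)+(1-\lambda)I(W;Z)+I(U;Y|W)+I(V;Z|W)-I(U;V|W)$$ over all finite-alphabet $p(u,v,w,x)$, where $(U,V,W,X,Y,Z)\sim p(u,v,w,x)q(y,z|x)$. If $(u,v,w)$ is such that $p(u,w)>0$ and $p(v,w)>0$, then $p(u,v,w)>0$, and $p(u,w,y)>0$ and $p(v,w,z)>0$ for all $y\in\mathcal Y$, $z\in\mathcal Z$.
   Context: A two-receiver discrete memoryless broadcast channel has finite input alphabet $\mathcal X$, finite output alphabets $\mathcal Y,\mathcal Z$ and transition law $q(y,z|x)$. *)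

From mathcomp Require Import all_boot all_order all_algebra.
From mathcomp Require Import reals exp.
Set Implicit Arguments. Unset Strict Implicit. Unset Printing Implicit Defensive.
Import Order.TTheory GRing.Theory Num.Theory.
Local Open Scope ring_scope.

Section Info.
Variable R : realType.

Definition pmf (T : finType) (P : T -> R) : Prop :=
  (forall t, 0 <= P t) /\ \sum_(t : T) P t = 1.

Definition bc_channel (X Y Z : finType) (q : X -> Y -> Z -> R) : Prop :=
  forall x, pmf (fun yz : Y * Z => q x yz.1 yz.2).

Definition pushf (T A : finType) (P : T -> R) (f : T -> A) (a : A) : R :=
  \sum_(t | f t == a) P t.

(* Shannon entropy (natural log; ln 0 = 0, so 0 ln 0 = 0) *)
Definition entropy (T A : finType) (P : T -> R) (f : T -> A) : R :=
  - \sum_(a : A) pushf P f a * ln (pushf P f a).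

Definition cond_entropy (T A B : finType) (P : T -> R) (f : T -> A) (g : T -> B) : R :=
  entropy P (fun t => (f t, g t)) - entropy P g.

Definition mutinf (T A B : finType) (P : T -> R) (f : T -> A) (g : T -> B) : R :=
  entropy P f + entropy P g - entropy P (fun t => (f t, g t)).

Definition cond_mutinf (T A B C : finType) (P : T -> R)
  (f : T -> A) (g : T -> B) (h : T -> C) : R :=
  entropy P (fun t => (f t, h t)) + entropy P (fun t => (g t, h t))
  - entropy P (fun t => (f t, g t, h t)) - entropy P h.

Definition omega (U V W X Y Z : finType) : finType := ((U * V * W * X) * (Y * Z))%type.

Section RV.
Variables U V W X Y Z : finType.
Definition rvU (o : omega U V W X Y Z) : U := o.1.1.1.1.
Definition rvV (o : omega U V W X Y Z) : V := o.1.1.1.2.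
Definition rvW (o : omega U V W X Y Z) : W := o.1.1.2.
Definition rvX (o : omega U V W X Y Z) : X := o.1.2.
Definition rvY (o : omega U V W X Y Z) : Y := o.2.1.
Definition rvZ (o : omega U V W X Y Z) : Z := o.2.2.

Definition joint (p : U * V * W * X -> R) (q : X -> Y -> Z -> R)
  (o : omega U V W X Y Z) : R := p o.1 * q o.1.2 o.2.1 o.2.2.

Definition marton_obj (lam : R) (p : U * V * W * X -> R) (q : X -> Y -> Z -> R) : R :=
  let P := joint p q in
  lam * mutinf P rvW rvY + (1 - lam) * mutinf P rvW rvZ
  + cond_mutinf P rvU rvY rvW + cond_mutinf P rvV rvZ rvW
  - cond_mutinf P rvU rvV rvW.
End RV.
End Info.

(* Suppose p(u,w) > 0 and p(v,w) > 0 but p(u,v,w) = 0, and move a small mass e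
   of p onto the point (u,v,w,x).  Since (u,v,w) is a new atom of (U,V,W), the
   entropy H(U,V,W), which enters the objective through -I(U;V|W), gains
   -e ln e.  Every other entropy changes by O(e): those entering with a plus
   sign drop by at most e times their value (concavity of -t ln t), and those
   entering with a minus sign grow at most along the tangent of -t ln t, whose
   slope is finite because the new mass only charges atoms of (W,Y), (W,Z),
   (U,Y,W), (V,Z,W) already charged by p -- this is where q(y|x), q(z|x) > 0 is
   used.  As -e ln e beats every linear function of e near 0, p would not be a
   maximizer.  The other two claims follow directly from q(y|x), q(z|x) > 0. *)
From mathcomp Require Import all_boot all_order all_algebra.
From mathcomp Require Import boolp reals sequences exp.
From mathcomp Require Import ring lra.
Set Implicit Arguments. Unset Strict Implicit. Unset Printing Implicit Defensive.
Import Order.TTheory GRing.Theory Num.Theory.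
Local Open Scope ring_scope.

Section NegXlnX.
Variable R : realType.
Implicit Types a b e m x : R.

Definition negxlnx x := - (x * ln x).

Lemma negxlnx0 : negxlnx 0 = 0.
Proof. by rewrite /negxlnx mul0r oppr0. Qed.

Lemma negxlnx_ge0 x : 0 <= x <= 1 -> 0 <= negxlnx x.
Proof. by move=> /andP[x0 x1]; rewrite /negxlnx oppr_ge0 mulr_ge0_le0 ?ln_le0. Qed.

Lemma ln_le_subr1 x : 0 < x -> ln x <= x - 1.
Proof. by move=> x0; have := @le_ln1Dx R (x - 1); rewrite (addrC 1) subrK; apply; lra. Qed.

Lemma negxlnx_le_tangent m x : 0 < m -> 0 <= x ->
  negxlnx x <= negxlnx m + (- ln m - 1) * (x - m).
Proof.
move=> m0; rewrite le_eqVlt => /orP[/eqP<-|x0]; first by rewrite negxlnx0 /negxlnx; lra.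
have : ln (m / x) <= m / x - 1 by apply: ln_le_subr1; rewrite divr_gt0.
rewrite ln_div ?posrE // => /(ler_wpM2l (ltW x0)).
rewrite mulrBr [X in _ <= X]mulrBr mulr1 mulrCA divff ?gt_eqF // mulr1 /negxlnx.
lra.
Qed.

Lemma negxlnx_concave e a b : 0 <= e <= 1 -> 0 <= a -> 0 <= b ->
  (1 - e) * negxlnx a + e * negxlnx b <= negxlnx ((1 - e) * a + e * b).
Proof.
move=> /andP[e0 e1] a0 b0; set m := (1 - e) * a + e * b.
have [m0|m_le0] := ltP 0 m; last first.
  have ea0 : 0 <= (1 - e) * a by rewrite mulr_ge0 // subr_ge0.
  have eb0 : 0 <= e * b by rewrite mulr_ge0.
  have {}ea0 : (1 - e) * a = 0 by move: m_le0; rewrite /m; lra.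
  have {}eb0 : e * b = 0 by move: m_le0; rewrite /m; lra.
  by rewrite /m ea0 eb0 addr0 negxlnx0 /negxlnx !mulrN !mulrA ea0 eb0 !mul0r; lra.
have ha := ler_wpM2l (_ : 0 <= 1 - e) (negxlnx_le_tangent m0 a0).
have hb := ler_wpM2l e0 (negxlnx_le_tangent m0 b0).
have tangent_avg : (1 - e) * (negxlnx m + (- ln m - 1) * (a - m))
  + e * (negxlnx m + (- ln m - 1) * (b - m)) = negxlnx m by rewrite /m; ring.
move: (ha ltac:(lra)) hb; lra.
Qed.

Lemma negxlnx_mix_ge e a b : 0 <= e <= 1 -> 0 <= a -> 0 <= b <= 1 ->
  (1 - e) * negxlnx a <= negxlnx ((1 - e) * a + e * b).
Proof.
move=> He a0 /andP[b0 b1]; have := negxlnx_concave He a0 b0.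
have : 0 <= e * negxlnx b by rewrite mulr_ge0 ?negxlnx_ge0 ?b0 //; case/andP: He.
lra.
Qed.

Lemma negxlnx_mix_le e a b : 0 <= e <= 1 -> 0 <= a -> 0 <= b -> (0 < b -> 0 < a) ->
  negxlnx ((1 - e) * a + e * b) <= negxlnx a + e * ((- ln a - 1) * (b - a)).
Proof.
move=> /andP[e0 e1] a0 b0 ba; have [a_gt0|] := ltP 0 a.
  have : 0 <= (1 - e) * a + e * b by rewrite addr_ge0 ?mulr_ge0 ?subr_ge0.
  move=> /(negxlnx_le_tangent a_gt0).
  by rewrite [e * (_ * _)]mulrCA; have -> : (1 - e) * a + e * b - a = e * (b - a) by ring.
move=> a_le0; have a_eq0 : a = 0 by apply/eqP; rewrite eq_le a_le0 a0.
have b_eq0 : b = 0.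
  by apply/eqP; rewrite eq_le b0 andbT leNgt; apply/negP => /ba; rewrite a_eq0 ltxx.
by rewrite a_eq0 b_eq0 subrr !mulr0 !addr0.
Qed.

Lemma negxlnx_not_linearly_bounded S :
  ~ (forall e, 0 <= e <= 1 -> negxlnx e <= e * S).
Proof.
(* At [e = expR (- (`|S| + 1))] we have [negxlnx e = (`|S| + 1) * e]. *)
pose e := expR (- (`|S| + 1)).
have e_gt0 : 0 < e := expR_gt0 _.
have e_le1 : e <= 1 by rewrite expR_le1 oppr_le0 addr_ge0.
move=> /(_ e); rewrite ltW //= e_le1 => /(_ isT).
rewrite /negxlnx expRK mulrN opprK ler_pM2l //.
have := ler_norm S; lra.
Qed.

End NegXlnX.

Section Pushforward.
Variables (R : realType) (T : finType).
Implicit Types (P Q : T -> R) (e : R).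

Lemma pushf_ge0 P (A : finType) (f : T -> A) a :
  (forall t, 0 <= P t) -> 0 <= pushf P f a.
Proof. by move=> P0; apply: sumr_ge0. Qed.

Lemma sum_pushf P (A : finType) (f : T -> A) : \sum_a pushf P f a = \sum_t P t.
Proof. by rewrite (partition_big f xpredT). Qed.

Lemma pushf_le1 P (A : finType) (f : T -> A) a : pmf P -> pushf P f a <= 1.
Proof.
move=> [P0 P1]; rewrite -P1 /pushf [X in _ <= X](bigID (fun t => f t == a)) /=.
by rewrite lerDl sumr_ge0.
Qed.

Lemma pushf_gt0 P (A : finType) (f : T -> A) t :
  (forall t, 0 <= P t) -> 0 < P t -> 0 < pushf P f (f t).
Proof.
move=> P0 Pt; rewrite /pushf (bigD1 t) //=.
by rewrite ltr_pwDl // sumr_ge0 // => ? _; apply: P0.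
Qed.

Lemma pushf_gt0P P (A : finType) (f : T -> A) a :
  (forall t, 0 <= P t) -> 0 < pushf P f a -> exists2 t, f t = a & 0 < P t.
Proof.
move=> P0 /gt_eqF/eqP/psumr_neq0P[// | t /andP[/eqP ft Pt]].
by exists t.
Qed.

Lemma entropyE P (A : finType) (f : T -> A) :
  entropy P f = \sum_a negxlnx (pushf P f a).
Proof. by rewrite /entropy /negxlnx sumrN. Qed.

Definition point_pmf (t0 t : T) : R := (t == t0)%:R.

Lemma pmf_point t0 : pmf (point_pmf t0).
Proof.
split=> [t|]; first by rewrite ler0n.
by rewrite (bigD1 t0) //= big1 ?addr0 /point_pmf ?eqxx // => t /negbTE ->.
Qed.

Definition mixture e P Q t := (1 - e) * P t + e * Q t.

Lemma mixture_pmf e P Q : 0 <= e <= 1 -> pmf P -> pmf Q -> pmf (mixture e P Q).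
Proof.
move=> /andP[e0 e1] [P0 P1] [Q0 Q1]; split.
  by move=> t; rewrite addr_ge0 ?mulr_ge0 //; lra.
by rewrite big_split /= -!mulr_sumr P1 Q1; ring.
Qed.

Lemma pushf_mixture e P Q (A : finType) (f : T -> A) a :
  pushf (mixture e P Q) f a = (1 - e) * pushf P f a + e * pushf Q f a.
Proof. by rewrite /pushf !mulr_sumr -big_split. Qed.

(* The right derivative of [e |-> entropy (mixture e P Q) f] at [0], when
   every atom of [pushf Q f] is an atom of [pushf P f]. *)
Definition entropy_slope P Q (A : finType) (f : T -> A) :=
  \sum_a (- ln (pushf P f a) - 1) * (pushf Q f a - pushf P f a).

Variables (e : R) (P Q : T -> R).
Hypotheses (He : 0 <= e <= 1) (HP : pmf P) (HQ : pmf Q).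

Let pushfP_ge0 (A : finType) (f : T -> A) a : 0 <= pushf P f a.
Proof. by apply: pushf_ge0; case: HP. Qed.

Let pushfQ_ge0 (A : finType) (f : T -> A) a : 0 <= pushf Q f a.
Proof. by apply: pushf_ge0; case: HQ. Qed.

Lemma entropy_mixture_ge (A : finType) (f : T -> A) :
  (1 - e) * entropy P f <= entropy (mixture e P Q) f.
Proof.
rewrite !entropyE mulr_sumr; apply: ler_sum => a _.
by rewrite pushf_mixture negxlnx_mix_ge ?pushfQ_ge0 ?pushf_le1.
Qed.

Lemma entropy_mixture_le (A : finType) (f : T -> A) :
  (forall a, 0 < pushf Q f a -> 0 < pushf P f a) ->
  entropy (mixture e P Q) f <= entropy P f + e * entropy_slope P Q f.
Proof.
move=> QP; rewrite !entropyE /entropy_slope mulr_sumr -big_split.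
apply: ler_sum => a _.
by rewrite pushf_mixture negxlnx_mix_le ?pushfP_ge0 ?pushfQ_ge0 //; apply: QP.
Qed.

Lemma entropy_mixture_new_atom (A : finType) (f : T -> A) c0 :
  pushf P f c0 = 0 -> (forall c, c != c0 -> pushf Q f c = 0) ->
  (1 - e) * entropy P f + negxlnx e <= entropy (mixture e P Q) f.
Proof.
move=> Pc0 Qc; have Qc0 : pushf Q f c0 = 1.
  by have [_ <-] := HQ; rewrite -(sum_pushf Q f) (bigD1 c0) //= big1 ?addr0.
rewrite !entropyE (bigD1 c0) //= [X in _ <= X](bigD1 c0) //= pushf_mixture.
rewrite Pc0 Qc0 negxlnx0 mulr0 mulr1 !add0r addrC lerD2r mulr_sumr.
apply: ler_sum => c /Qc Qc_eq0.
by rewrite pushf_mixture negxlnx_mix_ge ?Qc_eq0 ?lexx ?ler01.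
Qed.

End Pushforward.

Arguments point_pmf {R T}.
Arguments pmf_point {R T}.

Section BroadcastChannel.
Variables (R : realType) (U V W X Y Z : finType) (q : X -> Y -> Z -> R).
Hypothesis Hq : bc_channel q.
Implicit Types (p : U * V * W * X -> R) (s : U * V * W * X) (e : R).

Lemma q_ge0 x y z : 0 <= q x y z.
Proof. by have [q0 _] := Hq x; apply: (q0 (y, z)). Qed.

Lemma joint_ge0 p : (forall s, 0 <= p s) -> forall o, 0 <= joint p q o.
Proof. by move=> p0 o; rewrite mulr_ge0 ?q_ge0. Qed.

Lemma joint_gt0 p (o : omega U V W X Y Z) : 0 < joint p q o -> 0 < p o.1.
Proof.
apply: contraTT; rewrite -!leNgt => p_le0.
by rewrite /joint mulr_le0_ge0 ?q_ge0.
Qed.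

Lemma joint_pmf p : pmf p -> pmf (joint p q).
Proof.
move=> [p0 p1]; split; first exact: joint_ge0.
rewrite -p1 /omega -(pair_big xpredT xpredT (fun s yz => joint p q (s, yz))) /=.
apply: eq_bigr => s _; rewrite /joint /= -mulr_sumr.
by have [_ ->] := Hq s.2; rewrite mulr1.
Qed.

Lemma joint_mixture e p p' :
  joint (mixture e p p') q = mixture e (joint p q) (joint p' q).
Proof. by apply/funext => o; rewrite /joint /mixture; ring. Qed.

Lemma pushf_joint_gt0P p (A : finType) (f : omega U V W X Y Z -> A) a :
  (forall s, 0 <= p s) -> 0 < pushf (joint p q) f a ->
  exists2 o, f o = a & 0 < p o.1.
Proof.
move=> p0 /pushf_gt0P[|o fo /joint_gt0]; first exact: joint_ge0.
by exists o.
Qed.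

Lemma pushf_joint_gt0_Y p (A : finType) (f : omega U V W X Y Z -> A) s y a :
  (forall s, 0 <= p s) -> 0 < p s -> 0 < \sum_z q s.2 y z ->
  (forall z, f (s, (y, z)) = a) -> 0 < pushf (joint p q) f a.
Proof.
move=> p0 ps /gt_eqF/eqP/psumr_neq0P[z _|z /andP[_ qz] fa]; first exact: q_ge0.
by rewrite -(fa z); apply: pushf_gt0; [apply: joint_ge0 | apply: mulr_gt0].
Qed.

Lemma pushf_joint_gt0_Z p (A : finType) (f : omega U V W X Y Z -> A) s z a :
  (forall s, 0 <= p s) -> 0 < p s -> 0 < \sum_y q s.2 y z ->
  (forall y, f (s, (y, z)) = a) -> 0 < pushf (joint p q) f a.
Proof.
move=> p0 ps /gt_eqF/eqP/psumr_neq0P[y _|y /andP[_ qy] fa]; first exact: q_ge0.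
by rewrite -(fa y); apply: pushf_gt0; [apply: joint_ge0 | apply: mulr_gt0].
Qed.

Lemma pushf_joint_point_gt0 s0 (A : finType) (f : omega U V W X Y Z -> A) a :
  0 < pushf (joint (point_pmf s0) q) f a -> exists yz, f (s0, yz) = a.
Proof.
have [point_ge0 _] := pmf_point (R := R) s0.
move=> /(pushf_joint_gt0P point_ge0)[[s yz] fa].
by rewrite /point_pmf ltr0n lt0b => /eqP <-; exists yz.
Qed.

Lemma pushf_joint_point_eq0 s0 (A : finType) (f : omega U V W X Y Z -> A) a :
  (forall yz, a != f (s0, yz)) -> pushf (joint (point_pmf s0) q) f a = 0.
Proof.
move=> a_ne; apply/eqP; rewrite eq_le pushf_ge0 ?andbT; last first.
  by apply: joint_ge0; case: (pmf_point (R := R) s0).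
rewrite leNgt; apply/negP => /pushf_joint_point_gt0[yz fa]; by move: (a_ne yz); rewrite fa eqxx.
Qed.

End BroadcastChannel.

Section NewAtomPerturbation.
Variables (R : realType) (U V W X Y Z : finType) (q : X -> Y -> Z -> R).
Hypothesis Hq : bc_channel q.
Variables (lam : R) (p : U * V * W * X -> R) (u : U) (v : V) (w : W) (x : X).
Hypotheses (Hlam : 0 <= lam <= 1) (Hp : pmf p).
Hypothesis pos_WY :
  forall y, 0 < pushf (joint p q) (fun o => (rvW o, @rvY U V W X Y Z o)) (w, y).
Hypothesis pos_WZ :
  forall z, 0 < pushf (joint p q) (fun o => (rvW o, @rvZ U V W X Y Z o)) (w, z).
Hypothesis pos_UYW :
  forall y, 0 < pushf (joint p q) (fun o => (rvU o, rvY o, @rvW U V W X Y Z o)) (u, y, w).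
Hypothesis pos_VZW :
  forall z, 0 < pushf (joint p q) (fun o => (rvV o, rvZ o, @rvW U V W X Y Z o)) (v, z, w).
Hypothesis new_UVW :
  pushf (joint p q) (fun o => (rvU o, rvV o, @rvW U V W X Y Z o)) (u, v, w) = 0.

Let s0 := (u, v, w, x).

Lemma marton_obj_new_atom_gain : exists S, forall e, 0 <= e <= 1 ->
  marton_obj lam p q + negxlnx e <= marton_obj lam (mixture e p (point_pmf s0)) q + e * S.
Proof.
have HP := joint_pmf Hq Hp; have HQ := joint_pmf Hq (pmf_point s0).
pose H (A : finType) (f : omega U V W X Y Z -> A) := entropy (joint p q) f.
pose K (A : finType) (f : omega U V W X Y Z -> A) :=
  entropy_slope (joint p q) (joint (point_pmf s0) q) f.
exists (lam * H _ (@rvY U V W X Y Z) + (1 - lam) * H _ (@rvZ U V W X Y Z)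
  + H _ (fun o => (rvY o, rvW o)) + H _ (fun o => (rvZ o, rvW o))
  + H _ (fun o => (rvU o, rvV o, rvW o))
  + lam * K _ (fun o => (rvW o, rvY o)) + (1 - lam) * K _ (fun o => (rvW o, rvZ o))
  + K _ (fun o => (rvU o, rvY o, rvW o)) + K _ (fun o => (rvV o, rvZ o, rvW o))).
move=> e He; rewrite /H /K {H K}.
have [lam0 lam1] : 0 <= lam /\ lam <= 1 by apply/andP.
have lam'0 : 0 <= 1 - lam by rewrite subr_ge0.
have supp (A : finType) (f : omega U V W X Y Z -> A) :
    (forall yz, 0 < pushf (joint p q) f (f (s0, yz))) ->
    forall a, 0 < pushf (joint (point_pmf s0) q) f a -> 0 < pushf (joint p q) f a.
  by move=> f_pos a /(pushf_joint_point_gt0 Hq)[yz <-].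
have lo := entropy_mixture_ge He HP HQ; have up := entropy_mixture_le He HP HQ.
have lY := ler_wpM2l lam0 (lo _ (@rvY U V W X Y Z)).
have lZ := ler_wpM2l lam'0 (lo _ (@rvZ U V W X Y Z)).
have lYW := lo _ (fun o => (rvY o, rvW o)); have lZW := lo _ (fun o => (rvZ o, rvW o)).
have lUVW := entropy_mixture_new_atom He HP HQ new_UVW
  (fun c c_ne => pushf_joint_point_eq0 Hq (fun yz => c_ne)).
have uWY := ler_wpM2l lam0 (up _ _ (supp _ _ (fun yz => pos_WY yz.1))).
have uWZ := ler_wpM2l lam'0 (up _ _ (supp _ _ (fun yz => pos_WZ yz.2))).
have uUYW := up _ _ (supp _ _ (fun yz => pos_UYW yz.1)).
have uVZW := up _ _ (supp _ _ (fun yz => pos_VZW yz.2)).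
rewrite /marton_obj /mutinf /cond_mutinf /= joint_mixture; lra.
Qed.
End NewAtomPerturbation.

Theorem lemma1 (R : realType) (X Y Z : finType) (q : X -> Y -> Z -> R)
  (Hq : bc_channel q)
  (HqY : forall x y, 0 < \sum_(z : Z) q x y z)
  (HqZ : forall x z, 0 < \sum_(y : Y) q x y z)
  (lam : R) (Hlam : 0 <= lam <= 1)
  (U V W : finType) (p : U * V * W * X -> R) (Hp : pmf p)
  (Hdet : cond_entropy (joint p q) (@rvX U V W X Y Z)
            (fun o => (rvU o, rvV o, rvW o)) = 0)
  (Hmax : forall (U' V' W' : finType) (p' : U' * V' * W' * X -> R),
            pmf p' -> marton_obj lam p' q <= marton_obj lam p q)
  (u : U) (v : V) (w : W)
  (Huw : 0 < pushf (joint p q) (fun o => (rvU o, rvW o)) (u, w))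
  (Hvw : 0 < pushf (joint p q) (fun o => (rvV o, rvW o)) (v, w)) :
  0 < pushf (joint p q) (fun o => (rvU o, rvV o, rvW o)) (u, v, w)
  /\ (forall y : Y, 0 < pushf (joint p q) (fun o => (rvU o, rvW o, rvY o)) (u, w, y))
  /\ (forall z : Z, 0 < pushf (joint p q) (fun o => (rvV o, rvW o, rvZ o)) (v, w, z)).
Proof.
have [p_ge0 _] := Hp.
have [o1 uw_o1 p_o1] := pushf_joint_gt0P Hq p_ge0 Huw.
have [o2 vw_o2 p_o2] := pushf_joint_gt0P Hq p_ge0 Hvw.
have posY (A : finType) (f : omega U V W X Y Z -> A) y a :
    (forall z, f (o1.1, (y, z)) = a) -> 0 < pushf (joint p q) f a.
  move=> fa; exact: (pushf_joint_gt0_Y Hq p_ge0 p_o1 (HqY _ y) fa).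
have posZ (A : finType) (f : omega U V W X Y Z -> A) z a :
    (forall y, f (o2.1, (y, z)) = a) -> 0 < pushf (joint p q) f a.
  move=> fa; exact: (pushf_joint_gt0_Z Hq p_ge0 p_o2 (HqZ _ z) fa).
case: uw_o1 => u_o1 w_o1; case: vw_o2 => v_o2 w_o2.
have pos_UWY y : 0 < pushf (joint p q) (fun o => (rvU o, rvW o, rvY o)) (u, w, y).
  by apply: (posY _ _ y) => z; rewrite -u_o1 -w_o1.
have pos_VWZ z : 0 < pushf (joint p q) (fun o => (rvV o, rvW o, rvZ o)) (v, w, z).
  by apply: (posZ _ _ z) => y; rewrite -v_o2 -w_o2.
split=> //; rewrite lt_def pushf_ge0 ?andbT; last exact: joint_ge0.
apply/eqP => new_UVW.
have [S gain] := marton_obj_new_atom_gain Hq o1.1.2 Hlam Hp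
  (fun y => posY _ _ y _ (fun z => congr2 pair w_o1 erefl))
  (fun z => posZ _ _ z _ (fun y => congr2 pair w_o2 erefl))
  (fun y => posY _ _ y _ (fun z => congr2 pair (congr2 pair u_o1 erefl) w_o1))
  (fun z => posZ _ _ z _ (fun y => congr2 pair (congr2 pair v_o2 erefl) w_o2))
  new_UVW.
apply: (negxlnx_not_linearly_bounded (S := S)) => e He.
have := Hmax _ _ _ _ (mixture_pmf He Hp (pmf_point (u, v, w, o1.1.2))).
have := gain e He; lra.
Qed.
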